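(* There exist a sequence $\{a_n\}_{n\in\mathbb Z}\in\ell^1(\mathbb Z)$ with $a_n>0$ for all $n$, and an infinite sequence $\{n_k\}_{k\ge1}\subset\mathbb N$ with $n_{k+1}>2n_k$ for all $k\ge1$, such that the entire functions $$h(z)=\sin\pi z\sum_{n\in\mathbb Z}\frac{a_n}{z-n},\qquad S(z)=\sin\pi z\sum_{n\in\mathbb Z}\frac{a_n^2}{z-n}$$ both vanish at the points $s_k=n_k+\tfrac12$, $k\in\mathbb N$, and $a_{n_k}=\alpha_kk^{-2}$ with $\alpha_k\in(1,3)$ for all $k\in\mathbb N$. *)

From Stdlib Require Import Reals ZArith Lra.
Open Scope R_scope.

(* Two-sided series over Z: sum_{n in Z} f n = l, enumerating Z as
   0, -1, 1, -2, 2, ... i.e. pairing f n with f (-n-1), n : nat. *)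
Definition Zseries (f : Z -> R) (l : R) : Prop :=
  infinite_sum (fun n : nat => f (Z.of_nat n) + f (- Z.of_nat n - 1)%Z) l.

Definition ell1 (a : Z -> R) : Prop :=
  exists l : R, Zseries (fun n => Rabs (a n)) l.

Definition sin_series_value (c : Z -> R) (z v : R) : Prop :=
  exists l : R, Zseries (fun n => c n / (z - IZR n)) l /\ v = sin (PI * z) * l.

(* Take n_k = 2^(12 k).  Off the blocks {n_k - 1, n_k, n_k + 1, n_k + 2}
   (indexed by j = k - 1) put a_n = 4^(-|n|).  On block j put the values
   1/k^2 + eta_j, 2/k^2 + xi_j, 2/k^2 - xi_j, 1/k^2 - eta_j.  Seen from s_k, the own
   block contributes the linear forms 4 xi_j + 4/3 eta_j and (16 xi_j + 8/3 eta_j)/k^2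
   to the two series, while all the rest (the remainder) is O(1/n_k) = O(1/k^4) and
   depends O(1/n_k)-Lipschitz on the parameters.  Solving the 2x2 systems with frozen
   remainders defines a correction map on the parameters which preserves the box
   |xi_j|, |eta_j| <= 1/(2k^2) and halves the weighted sup-distance; its fixed point
   yields the sequence. *)

From Stdlib Require Import Reals ZArith Lra Lia.
From Coquelicot Require Import Series.
Open Scope R_scope.

Lemma Rabs_le_between (x y : R) : Rabs x <= y -> - y <= x <= y.
Proof. unfold Rabs; destruct (Rcase_abs x); intros; lra. Qed.

Lemma div_bound (v x V X : R) : Rabs v <= V -> 0 < X -> X <= Rabs x -> Rabs (v / x) <= V / X.
Proof.
  intros Hv HX Hx. unfold Rdiv. rewrite Rabs_mult, Rabs_inv.
  apply Rmult_le_compat; [apply Rabs_pos | left; apply Rinv_0_lt_compat; lra | exact Hv |].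
  apply Rinv_le_contravar; lra.
Qed.

Lemma sum_bound (f : nat -> R) (n : nat) (c : R) :
  (forall d, (d <= n)%nat -> Rabs (f d) <= c) -> Rabs (sum_f_R0 f n) <= INR (S n) * c.
Proof.
  intro H. eapply Rle_trans; [apply sum_f_R0_triangle|].
  rewrite Rmult_comm, <- sum_cte. apply sum_Rle; exact H.
Qed.

Lemma cv_const (c : R) : Un_cv (fun _ => c) c.
Proof. intros eps He; exists 0%nat; intros n _; unfold Rdist; rewrite Rminus_diag, Rabs_R0; lra. Qed.

Lemma series_ext (u v : nat -> R) (l : R) :
  (forall n, u n = v n) -> infinite_sum u l -> infinite_sum v l.
Proof. intros E; apply Un_cv_ext; intro n; apply sum_eq; auto. Qed.

Lemma series_plus (u v : nat -> R) (l m : R) :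
  infinite_sum u l -> infinite_sum v m -> infinite_sum (fun n => u n + v n) (l + m).
Proof.
  intros Hu Hv; apply (Un_cv_ext (fun n => sum_f_R0 u n + sum_f_R0 v n)).
  - intro n; symmetry; apply plus_sum.
  - now apply CV_plus.
Qed.

Lemma series_minus (u v : nat -> R) (l m : R) :
  infinite_sum u l -> infinite_sum v m -> infinite_sum (fun n => u n - v n) (l - m).
Proof.
  intros Hu Hv; apply (Un_cv_ext (fun n => sum_f_R0 u n - sum_f_R0 v n)).
  - intro n; symmetry; apply minus_sum.
  - now apply CV_minus.
Qed.

Lemma series_scal (u : nat -> R) (l c : R) :
  infinite_sum u l -> infinite_sum (fun n => c * u n) (c * l).
Proof.
  intros Hu; apply (Un_cv_ext (fun n => c * sum_f_R0 u n)).
  - intro n; rewrite scal_sum; apply sum_eq; intros; ring.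
  - apply CV_mult; [apply cv_const | exact Hu].
Qed.

Lemma series_single (j : nat) (c : R) :
  infinite_sum (fun n => if Nat.eqb n j then c else 0) c.
Proof.
  assert (partial : forall m, sum_f_R0 (fun n => if Nat.eqb n j then c else 0) m
                              = if Nat.leb j m then c else 0).
  { induction m as [|m IH].
    - simpl; destruct j; reflexivity.
    - rewrite tech5, IH. destruct (Nat.eqb_spec (S m) j), (Nat.leb_spec j m),
        (Nat.leb_spec j (S m)); try lia; ring. }
  apply (CV_shift _ j). apply (Un_cv_ext (fun _ => c)); [|apply cv_const].
  intro n; rewrite partial; destruct (Nat.leb_spec j (n + j)); [reflexivity | lia].
Qed.

Lemma series_value (u : nat -> R) (l : R) : infinite_sum u l -> Series u = l.
Proof. intro H; apply is_series_unique, is_series_Reals, H. Qed.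

Lemma series_comparison (u M : nat -> R) (L c : R) :
  0 <= c -> (forall n, Rabs (u n) <= c * M n) -> infinite_sum M L ->
  exists l, infinite_sum u l /\ Rabs l <= c * L.
Proof.
  intros Hc Hu HM. pose proof (series_scal M L c HM) as HcM.
  assert (Habs : {l | Un_cv (sum_f_R0 (fun n => Rabs (u n))) l}).
  { apply (Rseries_CV_comp _ (fun n => c * M n)).
    - intro n; split; [apply Rabs_pos | apply Hu].
    - exists (c * L); exact HcM. }
  destruct (cv_cauchy_2 u (cauchy_abs u (cv_cauchy_1 _ Habs))) as [l Hl].
  exists l; split; [exact Hl|].
  exact (sum_cv_maj (fun n => c * M n) (fun n _ => u n) 0 l (c * L) Hl HcM (fun n => Hu n)).
Qed.

Lemma geometric_half : infinite_sum (fun n => (/ 2) ^ n) 2.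
Proof.
  pose proof (GP_infinite (/ 2) ltac:(rewrite Rabs_right; lra)) as H.
  replace (/ (1 - / 2)) with 2 in H by field.
  apply (series_ext _ _ _ (fun n => Rmult_1_l _) H).
Qed.

Definition isq (j : nat) : R := / (INR j + 1) ^ 2.

Lemma isq_pos (j : nat) : 0 < isq j.
Proof. unfold isq; apply Rinv_0_lt_compat, pow_lt; pose proof (pos_INR j); lra. Qed.

Lemma isq_le_1 (j : nat) : isq j <= 1.
Proof.
  unfold isq; pose proof (pos_INR j). rewrite <- Rinv_1.
  apply Rinv_le_contravar; [lra | nra].
Qed.

(* sum_j 1/(j+1)^2 <= 2, by comparison with the telescoping sum of 1/((j+1)(j+2)). *)
Lemma inverse_square_series : exists S, infinite_sum isq S /\ S <= 2.
Proof.
  assert (telescope : forall n, sum_f_R0 (fun j => / ((INR j + 1) * (INR j + 2))) n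
                                = 1 - / (INR n + 2)).
  { induction n as [|n IH]; [simpl; field|].
    rewrite tech5, IH, S_INR; pose proof (pos_INR n); field; lra. }
  assert (Htel : infinite_sum (fun j => / ((INR j + 1) * (INR j + 2))) 1).
  { apply (Un_cv_ext (fun n => 1 - / (INR n + 2))); [intro; symmetry; apply telescope|].
    assert (vanish : Un_cv (fun n => / (INR n + 2)) 0).
    { apply (Un_cv_ext (fun n => pos (RinvN (n + 1)))); [|exact (CV_shift' _ 1 0 RinvN_cv)].
      intro n; simpl pos; rewrite plus_INR; simpl INR; f_equal; ring. }
    pose proof (CV_minus _ _ _ _ (cv_const 1) vanish) as H; rewrite Rminus_0_r in H; exact H. }
  destruct (series_comparison isq (fun j => / ((INR j + 1) * (INR j + 2))) 1 2 ltac:(lra))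
    as [S [HS HSb]].
  - intro j; unfold isq; pose proof (pos_INR j).
    rewrite Rabs_right by (apply Rle_ge, Rlt_le, Rinv_0_lt_compat, pow_lt; lra).
    replace (2 * / ((INR j + 1) * (INR j + 2))) with (/ ((INR j + 1) * (INR j + 2) / 2)) by (field; lra).
    apply Rinv_le_contravar; [nra | simpl; nra].
  - exact Htel.
  - exists S; split; [exact HS | pose proof (Rle_abs S); lra].
Qed.

Lemma dist_to_limit (U : nat -> R) (l x c : R) (m : nat) :
  Un_cv U l -> (forall n, (m <= n)%nat -> Rabs (x - U n) <= c) -> Rabs (x - l) <= c.
Proof.
  intros Hl Hb. apply Rnot_lt_le; intro Hlt.
  destruct (Hl (Rabs (x - l) - c)) as [N HN]; [lra|].
  specialize (HN (m + N)%nat ltac:(lia)). specialize (Hb (m + N)%nat ltac:(lia)).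
  unfold Rdist in HN. pose proof (Rabs_triang (x - U (m + N)%nat) (U (m + N)%nat - l)).
  replace (x - U (m + N)%nat + (U (m + N)%nat - l)) with (x - l) in * by ring. lra.
Qed.

Lemma le_up_to_geometric (r a c : R) : (forall m, r <= a + c * (/ 2) ^ m) -> r <= a.
Proof.
  intros H. apply Rnot_lt_le; intro Hlt.
  destruct (pow_lt_1_zero (/ 2) ltac:(rewrite Rabs_right; lra) ((r - a) / (Rabs c + 1)))
    as [N HN]; [apply Rdiv_lt_0_compat; pose proof (Rabs_pos c); lra|].
  specialize (HN N (le_n N)). specialize (H N).
  rewrite Rabs_right in HN by (apply Rle_ge, pow_le; lra).
  pose proof (Rabs_pos c). pose proof (Rle_abs c). pose proof (pow_lt (/ 2) N ltac:(lra)).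
  assert (c * (/ 2) ^ N < r - a); [|lra].
  apply Rle_lt_trans with ((Rabs c + 1) * (/ 2) ^ N); [nra|].
  replace (r - a) with ((Rabs c + 1) * ((r - a) / (Rabs c + 1))) by (field; lra).
  apply Rmult_lt_compat_l; lra.
Qed.

(** * A fixed point theorem for weighted sup-metrics *)

(* Sequences [u : I -> R] are compared in the weighted sup-distance
   [sup_i |u i - v i| / w i]; a map that preserves the box [|u i| <= w i / 2]
   and halves distances on it has a fixed point in the box.  This is the
   Banach fixed point theorem, proved directly by Picard iteration. *)
Section WeightedContraction.
Variables (I : Type) (w : I -> R).
Hypothesis w_pos : forall i, 0 < w i.

Definition in_box (u : I -> R) : Prop := forall i, Rabs (u i) <= w i / 2.
Definition close (u v : I -> R) (delta : R) : Prop :=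
  forall i, Rabs (u i - v i) <= delta * w i.

Lemma box_close (u v : I -> R) : in_box u -> in_box v -> close u v 1.
Proof.
  intros Hu Hv i. specialize (Hu i). specialize (Hv i).
  pose proof (Rabs_triang (u i) (- v i)). rewrite Rabs_Ropp in *. unfold Rminus. lra.
Qed.

Lemma close_trans (u v z : I -> R) (d1 d2 : R) :
  close u v d1 -> close v z d2 -> close u z (d1 + d2).
Proof.
  intros H1 H2 i. specialize (H1 i). specialize (H2 i).
  pose proof (Rabs_triang (u i - v i) (v i - z i)).
  replace (u i - v i + (v i - z i)) with (u i - z i) in * by ring. lra.
Qed.

Lemma close_sym (u v : I -> R) (delta : R) : close u v delta -> close v u delta.
Proof. intros H i; rewrite Rabs_minus_sym; apply H. Qed.

Variable T : (I -> R) -> I -> R.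
Hypothesis T_box : forall u, in_box u -> in_box (T u).
Hypothesis T_contract : forall u v delta,
  in_box u -> in_box v -> close u v delta -> close (T u) (T v) (delta / 2).

Let picard (m : nat) : I -> R := Nat.iter m T (fun _ => 0).

Lemma picard_box (m : nat) : in_box (picard m).
Proof.
  induction m as [|m IH]; [|apply T_box, IH].
  intro i; simpl; rewrite Rabs_R0; pose proof (w_pos i); lra.
Qed.

Lemma picard_step (m : nat) : close (picard m) (picard (S m)) ((/ 2) ^ m).
Proof.
  induction m as [|m IH]; [apply box_close; apply picard_box|].
  replace ((/ 2) ^ S m) with ((/ 2) ^ m / 2) by (simpl; field).
  apply T_contract; auto using picard_box.
Qed.

Lemma picard_tail (m p : nat) : close (picard m) (picard (m + p)) (2 * (/ 2) ^ m).
Proof.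
  assert (exact_bound : close (picard m) (picard (m + p)) (2 * (/ 2) ^ m - 2 * (/ 2) ^ (m + p))).
  { induction p as [|p IH].
    - rewrite Nat.add_0_r; intro i; rewrite Rminus_diag, Rabs_R0; lra.
    - replace (m + S p)%nat with (S (m + p)) by lia.
      replace (2 * (/ 2) ^ m - 2 * (/ 2) ^ S (m + p))
        with (2 * (/ 2) ^ m - 2 * (/ 2) ^ (m + p) + (/ 2) ^ (m + p)) by (simpl; field).
      exact (close_trans _ _ _ _ _ IH (picard_step (m + p))). }
  intro i; eapply Rle_trans; [apply exact_bound|].
  apply Rmult_le_compat_r; [apply Rlt_le, w_pos|].
  pose proof (pow_lt (/ 2) (m + p) ltac:(lra)); lra.
Qed.

Lemma picard_cauchy (i : I) : Cauchy_crit (fun m => picard m i).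
Proof.
  intros eps He. pose proof (w_pos i).
  destruct (pow_lt_1_zero (/ 2) ltac:(rewrite Rabs_right; lra) (eps / (2 * w i)))
    as [N HN]; [apply Rdiv_lt_0_compat; lra|].
  exists N. intros n m Hn Hm. unfold Rdist.
  assert (key : forall a b, (N <= a)%nat -> Rabs (picard a i - picard (a + b) i) < eps).
  { intros a b Ha. specialize (HN a Ha).
    rewrite Rabs_right in HN by (apply Rle_ge, pow_le; lra).
    eapply Rle_lt_trans; [apply picard_tail|].
    replace eps with (2 * w i * (eps / (2 * w i))) by (field; lra).
    replace (2 * (/ 2) ^ a * w i) with (2 * w i * (/ 2) ^ a) by ring.
    apply Rmult_lt_compat_l; lra. }
  destruct (Nat.le_ge_cases n m) as [Hnm|Hmn].
  - replace m with (n + (m - n))%nat by lia. apply key, Hn.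
  - rewrite Rabs_minus_sym. replace n with (m + (n - m))%nat by lia. apply key, Hm.
Qed.

Let limit (i : I) : R := proj1_sig (R_complete _ (picard_cauchy i)).

Lemma picard_limit (m : nat) : close (picard m) limit (2 * (/ 2) ^ m).
Proof.
  intro i. apply (dist_to_limit (fun n => picard n i) _ _ _ m).
  - exact (proj2_sig (R_complete _ (picard_cauchy i))).
  - intros n Hn. replace n with (m + (n - m))%nat by lia. apply picard_tail.
Qed.

Theorem weighted_contraction_fixed_point :
  exists u, in_box u /\ forall i, T u i = u i.
Proof.
  assert (limit_box : in_box limit).
  { intro i. apply (le_up_to_geometric _ _ (2 * w i)). intro m.
    pose proof (picard_limit m i) as Hlim. pose proof (picard_box m i).
    rewrite Rabs_minus_sym in Hlim.
    pose proof (Rabs_triang (picard m i) (limit i - picard m i)).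
    replace (picard m i + (limit i - picard m i)) with (limit i) in * by ring.
    replace (2 * w i * (/ 2) ^ m) with (2 * (/ 2) ^ m * w i) by ring. lra. }
  exists limit. split; [exact limit_box|]. intro i.
  assert (near : forall m, Rabs (T limit i - limit i) <= 0 + 2 * w i * (/ 2) ^ m).
  { intro m.
    assert (HT : close (T limit) (picard (S m)) (2 * (/ 2) ^ m / 2)).
    { apply T_contract; auto using picard_box. apply close_sym, picard_limit. }
    pose proof (close_trans _ _ _ _ _ HT (picard_limit (S m)) i). simpl in *. lra. }
  pose proof (le_up_to_geometric _ _ _ near) as H.
  revert H; unfold Rabs; destruct (Rcase_abs _); intros; lra.
Qed.

End WeightedContraction.

Arguments in_box {I} w u.
Arguments close {I} w u v delta.

Lemma cv_subsequence (U : nat -> R) (phi : nat -> nat) (l : R) :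
  Un_cv U l -> (forall n, (n <= phi n)%nat) -> Un_cv (fun n => U (phi n)) l.
Proof.
  intros H Hphi eps He. destruct (H eps He) as [N HN].
  exists N; intros n Hn; apply HN; specialize (Hphi n); lia.
Qed.

Section SparseSeries.
Variables (start : nat -> nat) (width : nat).
Hypothesis start_gap : forall j, (start j + width < start (S j))%nat.

Definition supported (h : nat -> R) : Prop :=
  forall n, (forall j d, (d <= width)%nat -> n <> (start j + d)%nat) -> h n = 0.

Definition block_sum (h : nat -> R) (j : nat) : R :=
  sum_f_R0 (fun d => h (start j + d)%nat) width.

Lemma start_increasing (i j : nat) : (i < j)%nat -> (start i + width < start j)%nat.
Proof.
  induction j as [|j IH]; intro Hij; [lia|].
  pose proof (start_gap j). destruct (Nat.eq_dec i j) as [->|]; [lia|].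
  specialize (IH ltac:(lia)); lia.
Qed.

Lemma start_ge (j : nat) : (j <= start j)%nat.
Proof. induction j as [|j IH]; [lia|]. pose proof (start_gap j); lia. Qed.

Lemma partial_sum_flat (h : nat -> R) (m n : nat) :
  (m <= n)%nat -> (forall i, (m < i <= n)%nat -> h i = 0) ->
  sum_f_R0 h n = sum_f_R0 h m.
Proof.
  intros Hmn Hz. induction n as [|n IH].
  - replace m with 0%nat by lia; reflexivity.
  - destruct (Nat.eq_dec m (S n)) as [->|]; [reflexivity|].
    rewrite tech5, IH, (Hz (S n)) by (lia || (intros; apply Hz; lia)); ring.
Qed.

Lemma partial_sum_block_end (h : nat -> R) (J : nat) :
  supported h -> sum_f_R0 h (start J + width) = sum_f_R0 (block_sum h) J.
Proof.
  intro Hh.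
  assert (split_block : forall j, (0 < start j)%nat ->
    sum_f_R0 h (start j + width) = sum_f_R0 h (start j - 1) + block_sum h j).
  { intros j Hj. rewrite (tech2 h (start j - 1)) by lia. unfold block_sum. f_equal.
    replace (start j + width - S (start j - 1))%nat with width by lia.
    apply sum_eq; intros d _; f_equal; lia. }
  induction J as [|J IH].
  - assert (below : forall i, (i < start 0)%nat -> h i = 0).
    { intros i Hi; apply Hh; intros j d _ E; pose proof (start_ge j).
      destruct j; [lia|]; pose proof (start_increasing 0 (S j)); lia. }
    simpl. destruct (start 0) as [|s] eqn:Hs.
    + unfold block_sum; rewrite Hs; reflexivity.
    + rewrite <- Hs, split_block, sum_eq_R0 by (lia || (intros; apply below; lia)).
      ring.
  - rewrite tech5, <- IH, split_block by (pose proof (start_gap J); lia). f_equal.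
    apply partial_sum_flat; [pose proof (start_gap J); lia|].
    intros i Hi; apply Hh; intros j d Hd E.
    destruct (Nat.lt_trichotomy j J) as [Hlt|[->|Hgt]]; [| lia |].
    + pose proof (start_increasing j J Hlt); lia.
    + destruct (Nat.eq_dec j (S J)) as [->|]; [lia|].
      pose proof (start_increasing (S J) j ltac:(lia)); lia.
Qed.

(* Absolute convergence of the block sums gives absolute convergence of h; the
   partial sums at block ends then identify its sum. *)
Lemma sparse_series (h : nat -> R) (LA L : R) :
  supported h ->
  infinite_sum (block_sum (fun n => Rabs (h n))) LA ->
  infinite_sum (block_sum h) L -> infinite_sum h L.
Proof.
  intros Hh HA HL.
  assert (Habs_supp : supported (fun n => Rabs (h n))).
  { intros n Hn; simpl; rewrite Hh by exact Hn; apply Rabs_R0. }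
  assert (growing : Un_growing (sum_f_R0 (fun n => Rabs (h n)))).
  { intro n; rewrite tech5; pose proof (Rabs_pos (h (S n))); lra. }
  assert (bounded : has_ub (sum_f_R0 (fun n => Rabs (h n)))).
  { exists LA; intros x [n ->].
    apply Rle_trans with (sum_f_R0 (fun n => Rabs (h n)) (start n + width)).
    - apply Rge_le, growing_prop; [exact growing|]. pose proof (start_ge n); lia.
    - rewrite partial_sum_block_end by exact Habs_supp.
      apply sum_incr; [exact HA|]. intro j; unfold block_sum.
      apply cond_pos_sum; intros; apply Rabs_pos. }
  destruct (cv_cauchy_2 h (cauchy_abs h (cv_cauchy_1 _ (growing_cv _ growing bounded))))
    as [l Hl].
  replace L with l; [exact Hl|].
  apply (UL_sequence (fun J => sum_f_R0 h (start J + width))).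
  - apply (cv_subsequence _ (fun J => start J + width)%nat); [exact Hl|].
    intro n; pose proof (start_ge n); lia.
  - apply (Un_cv_ext (sum_f_R0 (block_sum h))); [|exact HL].
    intro J; symmetry; apply partial_sum_block_end, Hh.
Qed.

End SparseSeries.

(* The nodes n_k = 2^(12 k).  Around n_k (k = j + 1) sits the block j of the four
   integers n_k - 1, n_k, n_k + 1, n_k + 2, symmetric about s_k = n_k + 1/2. *)
Definition node (k : nat) : nat := 2 ^ (12 * k).
Definition block_start (j : nat) : nat := node (S j) - 1.

Lemma node_S (k : nat) : node (S k) = (4096 * node k)%nat.
Proof.
  unfold node; replace (12 * S k)%nat with (12 + 12 * k)%nat by lia.
  rewrite Nat.pow_add_r; reflexivity.
Qed.

Lemma node_pos (k : nat) : (1 <= node k)%nat.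
Proof. induction k; [unfold node; simpl; lia | rewrite node_S; lia]. Qed.

Lemma node_increasing (i j : nat) : (i < j)%nat -> (4096 * node i <= node j)%nat.
Proof.
  induction j as [|j IH]; intro Hij; [lia|]. rewrite node_S.
  destruct (Nat.eq_dec i j) as [->|]; [lia|]. specialize (IH ltac:(lia)); lia.
Qed.

Lemma node_ge_4096 (j : nat) : (4096 <= node (S j))%nat.
Proof. rewrite node_S; pose proof (node_pos j); lia. Qed.

Lemma block_gap (j : nat) : (block_start j + 3 < block_start (S j))%nat.
Proof. unfold block_start; rewrite (node_S (S j)); pose proof (node_pos (S j)); lia. Qed.

(* n_k >= 4096 k^4 (k = j + 1), which beats the factor k^2 of the second equation. *)
Lemma node_large (j : nat) : 4096 * (INR j + 1) ^ 4 <= INR (node (S j)).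
Proof.
  assert (Hnat : forall k, (4096 * S k ^ 4 <= node (S k))%nat).
  { induction k as [|k IH]; [unfold node; simpl; lia|]. rewrite (node_S (S k)).
    assert (S (S k) ^ 4 <= 16 * S k ^ 4)%nat; [|lia].
    replace (16 * S k ^ 4)%nat with ((2 * S k) ^ 4)%nat by (rewrite Nat.pow_mul_l; reflexivity).
    apply Nat.pow_le_mono_l; lia. }
  pose proof (le_INR _ _ (Hnat j)) as H. rewrite mult_INR, pow_INR, (S_INR j) in H.
  replace (INR 4096) with 4096 in H by (simpl; ring). exact H.
Qed.

Lemma block_position (j d : nat) :
  INR (block_start j + d) = INR (node (S j)) - 1 + INR d.
Proof.
  unfold block_start; pose proof (node_pos (S j)).
  rewrite plus_INR, minus_INR by lia; simpl; ring.
Qed.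

Lemma node_increasing_R (i j : nat) : (i < j)%nat -> 4096 * INR (node i) <= INR (node j).
Proof.
  intro H; pose proof (le_INR _ _ (node_increasing i j H)) as E.
  rewrite mult_INR in E; replace (INR 4096) with 4096 in E by (simpl; ring); exact E.
Qed.

(* Decoding: n lies in block j at offset d iff S n = 2^(12 (j+1)) + d with d <= 3. *)
Definition block_of (n : nat) : option (nat * nat) :=
  let L := Nat.log2 (S n) in
  if (Nat.eqb (L mod 12) 0 && Nat.ltb 0 L && Nat.leb (S n - 2 ^ L) 3)%bool
  then Some (L / 12 - 1, S n - 2 ^ L)%nat else None.

Lemma block_of_some (n j d : nat) :
  block_of n = Some (j, d) -> (d <= 3)%nat /\ n = (block_start j + d)%nat.
Proof.
  unfold block_of; set (L := Nat.log2 (S n)).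
  destruct (Nat.eqb_spec (L mod 12) 0), (Nat.ltb_spec 0 L), (Nat.leb_spec (S n - 2 ^ L) 3);
    intro E; cbn [andb] in E; try discriminate.
  assert (j = L / 12 - 1 /\ d = S n - 2 ^ L)%nat as [-> ->] by (split; congruence).
  pose proof (Nat.log2_spec (S n) ltac:(lia)) as [Hlo _]; fold L in Hlo.
  assert (HL : L = (12 * (L / 12))%nat) by (pose proof (Nat.div_mod L 12 ltac:(lia)); lia).
  split; [lia|]. unfold block_start, node.
  replace (S (L / 12 - 1)) with (L / 12)%nat by (destruct (L / 12)%nat; lia).
  rewrite <- HL. pose proof (Nat.pow_nonzero 2 L ltac:(lia)). lia.
Qed.

Lemma block_of_block (j d : nat) :
  (d <= 3)%nat -> block_of (block_start j + d) = Some (j, d).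
Proof.
  intro Hd. unfold block_of, block_start. pose proof (node_ge_4096 j).
  replace (S (node (S j) - 1 + d)) with (node (S j) + d)%nat by (pose proof (node_pos (S j)); lia).
  assert (HL : Nat.log2 (node (S j) + d) = (S j * 12)%nat).
  { apply Nat.log2_unique; [lia|]. unfold node in *.
    replace (12 * S j)%nat with (S j * 12)%nat in * by lia. rewrite Nat.pow_succ_r'; lia. }
  rewrite HL. unfold node. replace (12 * S j)%nat with (S j * 12)%nat by lia.
  rewrite Nat.Div0.mod_mul, Nat.div_mul by lia.
  replace (2 ^ (S j * 12) + d - 2 ^ (S j * 12))%nat with d by lia.
  destruct (Nat.leb_spec d 3), (Nat.ltb_spec 0 (S j * 12)); try lia.
  simpl; do 2 f_equal; lia.
Qed.

(** * The sequence a *)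

(* The unknowns: two real parameters per block, xi_j = u (j, true) and
   eta_j = u (j, false), measured in the weight isq j = 1/k^2 (k = j + 1). *)
Definition weight (i : nat * bool) : R := isq (fst i).
Definition xi (u : nat * bool -> R) (j : nat) : R := u (j, true).
Definition eta (u : nat * bool -> R) (j : nat) : R := u (j, false).

Lemma weight_pos (i : nat * bool) : 0 < weight i.
Proof. apply isq_pos. Qed.

Lemma close_nonneg (u v : nat * bool -> R) (delta : R) : close weight u v delta -> 0 <= delta.
Proof.
  intro Huv. pose proof (Huv (0%nat, true)) as H0. pose proof (weight_pos (0%nat, true)).
  pose proof (Rabs_pos (u (0%nat, true) - v (0%nat, true))). nra.
Qed.

Definition block_value (u : nat * bool -> R) (j d : nat) : R :=
  match d with
  | 0%nat => isq j + eta u j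
  | 1%nat => 2 * isq j + xi u j
  | 2%nat => 2 * isq j - xi u j
  | _ => isq j - eta u j
  end.

Definition decay (z : Z) : R := (/ 4) ^ Z.abs_nat z.

Definition seq_a (u : nat * bool -> R) (z : Z) : R :=
  if Z.ltb z 0 then decay z else
  match block_of (Z.to_nat z) with
  | Some (j, d) => block_value u j d
  | None => decay z
  end.

Lemma block_value_bounds (u : nat * bool -> R) (j d : nat) :
  in_box weight u -> 0 < block_value u j d <= 3 * isq j.
Proof.
  intro Hu. pose proof (Hu (j, true)) as Hx. pose proof (Hu (j, false)) as He.
  unfold weight in Hx, He; simpl in Hx, He. pose proof (isq_pos j).
  apply Rabs_le_between in Hx; apply Rabs_le_between in He.
  unfold block_value, xi, eta; destruct d as [|[|[|d]]]; lra.
Qed.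

Lemma block_value_close (u v : nat * bool -> R) (delta : R) (j d : nat) :
  close weight u v delta -> Rabs (block_value u j d - block_value v j d) <= delta * isq j.
Proof.
  intro Huv. pose proof (Huv (j, true)) as Hx. pose proof (Huv (j, false)) as He.
  unfold weight in Hx, He; simpl in Hx, He.
  unfold block_value, xi, eta; destruct d as [|[|[|d]]];
    match goal with |- Rabs ?x <= _ =>
      first [ replace x with (u (j, true) - v (j, true)) by ring
            | replace x with (u (j, false) - v (j, false)) by ring
            | replace x with (- (u (j, true) - v (j, true))) by ring
            | replace x with (- (u (j, false) - v (j, false))) by ring ] end;
    rewrite ?Rabs_Ropp; assumption.
Qed.

Definition block_part (phi : Z -> R -> R) (u : nat * bool -> R) (n : nat) : R :=
  match block_of n with
  | Some (j, d) => phi (Z.of_nat n) (block_value u j d)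
  | None => 0
  end.

Definition base_part (phi : Z -> R -> R) (n : nat) : R :=
  match block_of n with
  | Some _ => 0
  | None => phi (Z.of_nat n) (decay (Z.of_nat n))
  end + phi (- Z.of_nat n - 1)%Z (decay (- Z.of_nat n - 1)).

Definition block_term (phi : Z -> R -> R) (u : nat * bool -> R) (j : nat) : R :=
  sum_f_R0 (fun d => phi (Z.of_nat (block_start j + d)) (block_value u j d)) 3.

Lemma pair_split (phi : Z -> R -> R) (u : nat * bool -> R) (n : nat) :
  phi (Z.of_nat n) (seq_a u (Z.of_nat n)) + phi (- Z.of_nat n - 1)%Z (seq_a u (- Z.of_nat n - 1))
  = block_part phi u n + base_part phi n.
Proof.
  unfold seq_a, block_part, base_part.
  replace (Z.ltb (Z.of_nat n) 0) with false by (symmetry; apply Z.ltb_ge; lia).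
  replace (Z.ltb (- Z.of_nat n - 1) 0) with true by (symmetry; apply Z.ltb_lt; lia).
  rewrite Nat2Z.id. destruct (block_of n) as [[j d]|]; ring.
Qed.

Lemma block_part_sum (phi : Z -> R -> R) (u : nat * bool -> R) (j : nat) :
  block_sum block_start 3 (block_part phi u) j = block_term phi u j.
Proof.
  unfold block_sum, block_term, block_part. apply sum_eq; intros d Hd.
  rewrite block_of_block by exact Hd; reflexivity.
Qed.

Lemma zseries_split (phi : Z -> R -> R) (u : nat * bool -> R) (c L LB : R) :
  0 <= c ->
  (forall j d, (d <= 3)%nat ->
     Rabs (phi (Z.of_nat (block_start j + d)) (block_value u j d)) <= c * isq j) ->
  infinite_sum (block_term phi u) L -> infinite_sum (base_part phi) LB ->
  Zseries (fun z => phi z (seq_a u z)) (L + LB).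
Proof.
  intros Hc Hterm HL HLB.
  assert (Hblocks : infinite_sum (block_part phi u) L).
  { destruct inverse_square_series as [S [HS _]].
    destruct (series_comparison (block_sum block_start 3 (fun n => Rabs (block_part phi u n)))
                isq S (4 * c)) as [LA [HA _]]; [lra| |exact HS|].
    - intro j. unfold block_sum. rewrite Rabs_right by
        (apply Rle_ge, cond_pos_sum; intros; apply Rabs_pos).
      replace (4 * c * isq j) with (sum_f_R0 (fun _ => c * isq j) 3) by (rewrite sum_cte; simpl; ring).
      apply sum_Rle; intros d Hd. unfold block_part.
      rewrite block_of_block by exact Hd. apply Hterm, Hd.
    - apply (sparse_series block_start 3 block_gap _ LA).
      + intros n Hn. unfold block_part. destruct (block_of n) as [[j d]|] eqn:E; [|reflexivity].
        destruct (block_of_some n j d E) as [Hd En]. exfalso; exact (Hn j d Hd En).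
      + exact HA.
      + apply (series_ext (block_term phi u)); [intro; symmetry; apply block_part_sum | exact HL]. }
  unfold Zseries. apply (series_ext (fun n => block_part phi u n + base_part phi n)).
  - intro n; symmetry; apply pair_split.
  - apply series_plus; assumption.
Qed.

Definition center (j0 : nat) : R := INR (node (S j0)) + / 2.

(* The term g(v)/(s - z) of the series defining h (g = id) and S (g = square). *)
Definition quotient (g : R -> R) (s : R) (z : Z) (v : R) : R := g v / (s - IZR z).

(* The two admissible profiles are controlled on [0, 3] (the range of a). *)
Definition profile (g : R -> R) : Prop :=
  (forall v, 0 <= v <= 3 -> Rabs (g v) <= 3 * v) /\
  (forall v v', 0 <= v <= 3 -> 0 <= v' <= 3 -> Rabs (g v - g v') <= 6 * Rabs (v - v')).

Lemma profile_id : profile (fun v => v).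
Proof.
  split; intros v.
  - intro; rewrite Rabs_right; lra.
  - intros v' _ _; pose proof (Rabs_pos (v - v')); lra.
Qed.

Lemma profile_square : profile (fun v => v ^ 2).
Proof.
  split.
  - intros v Hv; rewrite Rabs_right by (apply Rle_ge, pow2_ge_0); nra.
  - intros v v' Hv Hv'. replace (v ^ 2 - v' ^ 2) with ((v + v') * (v - v')) by ring.
    rewrite Rabs_mult, (Rabs_right (v + v')) by lra.
    apply Rmult_le_compat_r; [apply Rabs_pos | lra].
Qed.

Lemma distance_half_integer (a b : nat) : / 2 <= Rabs (INR a + / 2 - INR b).
Proof.
  destruct (Nat.le_gt_cases b a) as [H|H].
  - replace (INR a + / 2 - INR b) with (INR (a - b) + / 2) by (rewrite minus_INR by lia; ring).
    pose proof (pos_INR (a - b)). rewrite Rabs_right; lra.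
  - assert (INR a + 1 <= INR b) by (rewrite <- S_INR; apply le_INR; lia).
    rewrite Rabs_left; lra.
Qed.

Lemma distance_other_block (j0 j d : nat) : j <> j0 -> (d <= 3)%nat ->
  INR (node (S j0)) / 2 <= Rabs (center j0 - INR (block_start j + d)).
Proof.
  intros Hj Hd. unfold center; rewrite block_position.
  pose proof (le_INR _ _ (node_ge_4096 j0)) as H0; replace (INR 4096) with 4096 in H0 by (simpl; ring).
  pose proof (pos_INR d). pose proof (le_INR _ _ Hd) as Hd'; replace (INR 3) with 3 in Hd' by (simpl; ring).
  pose proof (le_INR _ _ (node_pos (S j))) as H1; simpl INR in H1.
  destruct (Nat.lt_total j j0) as [Hlt|[Heq|Hgt]]; [| contradiction |].
  - pose proof (node_increasing_R (S j) (S j0) ltac:(lia)). rewrite Rabs_right; lra.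
  - pose proof (node_increasing_R (S j0) (S j) ltac:(lia)). rewrite Rabs_left; lra.
Qed.

Lemma distance_center (j0 n : nat) : / 2 <= Rabs (center j0 - INR n).
Proof. apply distance_half_integer. Qed.

Lemma distance_own_block (j0 d : nat) : center j0 - INR (block_start j0 + d) = 3 / 2 - INR d.
Proof. unfold center; rewrite block_position; field. Qed.

Definition others (phi : Z -> R -> R) (u : nat * bool -> R) (j0 j : nat) : R :=
  if Nat.eqb j j0 then 0 else block_term phi u j.

Definition remainder (g : R -> R) (u : nat * bool -> R) (j0 : nat) : R :=
  Series (base_part (quotient g (center j0))) + Series (others (quotient g (center j0)) u j0).

Section BlockEstimates.
Variables (g : R -> R) (j0 : nat).
Hypothesis g_profile : profile g.
Let X := INR (node (S j0)).
Let phi := quotient g (center j0).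

Lemma X_large : 4096 <= X.
Proof. unfold X; pose proof (le_INR _ _ (node_ge_4096 j0)); simpl in *; lra. Qed.

Lemma quotient_at (n : nat) (v : R) : phi (Z.of_nat n) v = g v / (center j0 - INR n).
Proof. unfold phi, quotient; rewrite <- INR_IZR_INZ; reflexivity. Qed.

Lemma profile_block_value (u : nat * bool -> R) (j d : nat) :
  in_box weight u -> Rabs (g (block_value u j d)) <= 9 * isq j.
Proof.
  intro Hu. destruct (block_value_bounds u j d Hu). pose proof (isq_le_1 j).
  destruct g_profile as [Hg _]. specialize (Hg (block_value u j d) ltac:(lra)); lra.
Qed.

(* Block entries are O(1/k^2), as every integer is 1/2 away from s_k. *)
Lemma block_entry_bound (u : nat * bool -> R) (j d : nat) :
  in_box weight u ->
  Rabs (phi (Z.of_nat (block_start j + d)) (block_value u j d)) <= 18 * isq j.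
Proof.
  intro Hu. rewrite quotient_at. replace (18 * isq j) with (9 * isq j / / 2) by field.
  apply div_bound; [apply profile_block_value, Hu | lra | apply distance_center].
Qed.

Lemma block_term_far (u : nat * bool -> R) (j : nat) :
  in_box weight u -> j <> j0 -> Rabs (block_term phi u j) <= 72 / X * isq j.
Proof.
  intros Hu Hj. pose proof X_large. unfold block_term.
  replace (72 / X * isq j) with (INR 4 * (9 * isq j / (X / 2))) by (simpl; field; lra).
  apply sum_bound; intros d Hd. rewrite quotient_at.
  apply div_bound; [apply profile_block_value, Hu | lra | apply distance_other_block; auto].
Qed.

Lemma block_term_far_lipschitz (u v : nat * bool -> R) (delta : R) (j : nat) :
  in_box weight u -> in_box weight v -> close weight u v delta -> j <> j0 ->
  Rabs (block_term phi u j - block_term phi v j) <= 48 * delta / X * isq j.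
Proof.
  intros Hu Hv Huv Hj. pose proof X_large. unfold block_term. rewrite <- minus_sum.
  replace (48 * delta / X * isq j) with (INR 4 * (6 * (delta * isq j) / (X / 2)))
    by (simpl; field; lra).
  apply sum_bound; intros d Hd. rewrite !quotient_at.
  assert (Hx : X / 2 <= Rabs (center j0 - INR (block_start j + d)))
    by (apply distance_other_block; auto).
  replace (g (block_value u j d) / (center j0 - INR (block_start j + d)) -
           g (block_value v j d) / (center j0 - INR (block_start j + d)))
    with ((g (block_value u j d) - g (block_value v j d)) / (center j0 - INR (block_start j + d)))
    by (field; intro E; rewrite E, Rabs_R0 in Hx; lra).
  apply div_bound; [| lra | exact Hx].
  destruct (block_value_bounds u j d Hu), (block_value_bounds v j d Hv). pose proof (isq_le_1 j).
  destruct g_profile as [_ Hg]. eapply Rle_trans; [apply Hg; lra|].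
  pose proof (block_value_close u v delta j d Huv); lra.
Qed.

(* The background term 4^-n at a point n >= 0: it is either at distance >= n_k / 2
   from s_k, or so far out that 4^-n <= 2^-n * 2 / n_k. *)
Lemma background_right (n : nat) : Rabs (phi (Z.of_nat n) ((/ 4) ^ n)) <= 12 / X * (/ 2) ^ n.
Proof.
  pose proof X_large. destruct g_profile as [Hg _].
  assert (HiX : 0 < / X) by (apply Rinv_0_lt_compat; lra).
  assert (Hq : 0 < (/ 2) ^ n) by (apply pow_lt; lra).
  assert (Hsq : (/ 4) ^ n = (/ 2) ^ n * (/ 2) ^ n)
    by (rewrite <- Rpow_mult_distr; f_equal; field).
  assert (Hhalf : (/ 2) ^ n <= 1) by (rewrite <- (pow1 n); apply pow_incr; lra).
  rewrite quotient_at. pose proof (Hg ((/ 4) ^ n) ltac:(nra)) as Hgn.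
  destruct (Rle_lt_dec (2 * INR n) X) as [Hs|Hs].
  - apply Rle_trans with (3 * (/ 4) ^ n / (X / 2)).
    + apply div_bound; [exact Hgn | lra |]. unfold center; fold X; rewrite Rabs_right; lra.
    + apply Rle_trans with (6 / X * (/ 2) ^ n); [|unfold Rdiv; nra].
      unfold Rdiv; rewrite Hsq. apply Rle_trans with (3 * (/ 2) ^ n * / (X / 2)); [|right; field; lra].
      apply Rmult_le_compat_r; [left; apply Rinv_0_lt_compat; lra | nra].
  - apply Rle_trans with (3 * (/ 4) ^ n / / 2).
    + apply div_bound; [exact Hgn | lra | apply distance_center].
    + assert (Hpow : (/ 2) ^ n <= 2 / X).
      { rewrite pow_inv. replace (2 / X) with (/ (X / 2)) by (field; lra).
        apply Rinv_le_contravar; [lra|].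
        pose proof (Nat.pow_gt_lin_r 2 n ltac:(lia)) as Hp.
        apply lt_INR in Hp; rewrite pow_INR in Hp.
        replace (INR 2) with 2 in Hp by (simpl; ring); lra. }
      rewrite Hsq. unfold Rdiv. replace (/ / 2) with 2 by field.
      unfold Rdiv in Hpow; nra.
Qed.

Lemma background_left (n : nat) :
  Rabs (phi (- Z.of_nat n - 1)%Z ((/ 4) ^ S n)) <= 3 / X * (/ 2) ^ n.
Proof.
  pose proof X_large. destruct g_profile as [Hg _].
  unfold phi, quotient. rewrite minus_IZR, opp_IZR, <- INR_IZR_INZ.
  pose proof (pos_INR n). pose proof (pow_lt (/ 2) n ltac:(lra)).
  assert (H4 : 0 < (/ 4) ^ S n <= (/ 2) ^ n).
  { assert (0 < (/ 4) ^ n <= (/ 2) ^ n) by (split; [apply pow_lt | apply pow_incr]; lra).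
    simpl; lra. }
  assert (Hhalf : (/ 2) ^ n <= 1) by (rewrite <- (pow1 n); apply pow_incr; lra).
  apply Rle_trans with (3 * (/ 2) ^ n / X); [|right; field; lra].
  apply div_bound; [| lra | unfold center; fold X; rewrite Rabs_right; lra].
  pose proof (Hg ((/ 4) ^ S n) ltac:(lra)); lra.
Qed.

Lemma base_part_bound (n : nat) : Rabs (base_part phi n) <= 15 / X * (/ 2) ^ n.
Proof.
  pose proof (background_right n). pose proof (background_left n).
  unfold base_part, decay.
  replace (Z.abs_nat (Z.of_nat n)) with n by lia.
  replace (Z.abs_nat (- Z.of_nat n - 1)) with (S n) by lia.
  eapply Rle_trans; [apply Rabs_triang|].
  assert (0 <= 12 / X * (/ 2) ^ n)
    by (apply Rmult_le_pos; [apply Rlt_le, Rdiv_lt_0_compat; pose proof X_large; lra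
                            | apply pow_le; lra]).
  destruct (block_of n); [rewrite Rabs_R0|]; unfold Rdiv in *; lra.
Qed.

Lemma base_series :
  infinite_sum (base_part phi) (Series (base_part phi)) /\ Rabs (Series (base_part phi)) <= 30 / X.
Proof.
  pose proof X_large.
  destruct (series_comparison (base_part phi) (fun n => (/ 2) ^ n) 2 (15 / X)) as [l [Hl Hb]].
  - apply Rlt_le, Rdiv_lt_0_compat; lra.
  - exact base_part_bound.
  - exact geometric_half.
  - rewrite (series_value _ _ Hl). split; [exact Hl | unfold Rdiv in *; lra].
Qed.

Lemma others_series (u : nat * bool -> R) : in_box weight u ->
  infinite_sum (others phi u j0) (Series (others phi u j0)) /\
  Rabs (Series (others phi u j0)) <= 144 / X.
Proof.
  intro Hu. pose proof X_large. destruct inverse_square_series as [S [HS HS2]].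
  destruct (series_comparison (others phi u j0) isq S (72 / X)) as [l [Hl Hb]].
  - apply Rlt_le, Rdiv_lt_0_compat; lra.
  - intro j. unfold others. destruct (Nat.eqb_spec j j0).
    + rewrite Rabs_R0. apply Rmult_le_pos; [apply Rlt_le, Rdiv_lt_0_compat; lra | apply Rlt_le, isq_pos].
    + apply block_term_far; assumption.
  - exact HS.
  - rewrite (series_value _ _ Hl). split; [exact Hl|].
    assert (72 / X * S <= 144 / X) by (unfold Rdiv; apply Rle_trans with (72 * / X * 2);
      [apply Rmult_le_compat_l; [apply Rmult_le_pos; [lra | left; apply Rinv_0_lt_compat; lra] | exact HS2]
      | right; ring]).
    lra.
Qed.

Lemma remainder_bound (u : nat * bool -> R) :
  in_box weight u -> Rabs (remainder g u j0) <= 174 / X.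
Proof.
  intro Hu. destruct base_series as [_ H1]. destruct (others_series u Hu) as [_ H2].
  unfold remainder. eapply Rle_trans; [apply Rabs_triang|]. fold phi. unfold Rdiv in *; lra.
Qed.

(* The background does not depend on u; the other blocks depend Lipschitz on u. *)
Lemma remainder_lipschitz (u v : nat * bool -> R) (delta : R) :
  in_box weight u -> in_box weight v -> close weight u v delta ->
  Rabs (remainder g u j0 - remainder g v j0) <= 96 * delta / X.
Proof.
  intros Hu Hv Huv. pose proof X_large. destruct inverse_square_series as [S [HS HS2]].
  pose proof (close_nonneg u v delta Huv) as Hdelta.
  destruct (series_comparison (fun j => others phi u j0 j - others phi v j0 j) isq S (48 * delta / X))
    as [l [Hl Hb]].
  - apply Rmult_le_pos; [lra | left; apply Rinv_0_lt_compat; lra].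
  - intro j. unfold others. destruct (Nat.eqb_spec j j0).
    + rewrite Rminus_diag, Rabs_R0. apply Rmult_le_pos; [|apply Rlt_le, isq_pos].
      apply Rmult_le_pos; [lra | left; apply Rinv_0_lt_compat; lra].
    + apply block_term_far_lipschitz; assumption.
  - exact HS.
  - assert (Hdiff : remainder g u j0 - remainder g v j0 = l).
    { unfold remainder; fold phi.
      rewrite (uniqueness_sum _ _ _ Hl (series_minus _ _ _ _
        (proj1 (others_series u Hu)) (proj1 (others_series v Hv)))); ring. }
    rewrite Hdiff. apply Rle_trans with (48 * delta / X * 2); [|right; field; lra].
    eapply Rle_trans; [exact Hb|]. apply Rmult_le_compat_l; [|exact HS2].
    apply Rmult_le_pos; [lra | left; apply Rinv_0_lt_compat; lra].
Qed.

Lemma zseries_at_center (u : nat * bool -> R) : in_box weight u ->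
  Zseries (fun z => phi z (seq_a u z)) (block_term phi u j0 + remainder g u j0).
Proof.
  intro Hu. destruct base_series as [HB _]. destruct (others_series u Hu) as [HO _].
  replace (block_term phi u j0 + remainder g u j0)
    with ((Series (others phi u j0) + block_term phi u j0) + Series (base_part phi))
    by (unfold remainder; fold phi; ring).
  apply (zseries_split phi u 18); [lra | intros; apply block_entry_bound, Hu | | exact HB].
  apply (series_ext (fun j => others phi u j0 j + if Nat.eqb j j0 then block_term phi u j0 else 0)).
  - intro j. unfold others. destruct (Nat.eqb_spec j j0) as [->|]; ring.
  - apply series_plus; [exact HO | apply series_single].
Qed.

End BlockEstimates.

(* On its own block the series are explicit linear forms in (xi, eta): the
   constant parts 1/k^2, 2/k^2 cancel by the antisymmetry of the offsets. *)
Lemma own_block_linear (u : nat * bool -> R) (j0 : nat) :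
  block_term (quotient (fun v => v) (center j0)) u j0 = 4 * xi u j0 + 4 / 3 * eta u j0.
Proof.
  unfold block_term; simpl sum_f_R0. rewrite !quotient_at, !distance_own_block.
  unfold block_value; simpl INR; field.
Qed.

Lemma own_block_square (u : nat * bool -> R) (j0 : nat) :
  block_term (quotient (fun v => v ^ 2) (center j0)) u j0
  = isq j0 * (16 * xi u j0 + 8 / 3 * eta u j0).
Proof.
  unfold block_term; simpl sum_f_R0. rewrite !quotient_at, !distance_own_block.
  unfold block_value; simpl INR; field.
Qed.

(** * The correction map and its fixed point *)

(* Solving the two equations of block j for (xi_j, eta_j), the other blocks frozen:
   4 xi + 4/3 eta = - r1 and 16 xi + 8/3 eta = - k^2 r2. *)
Definition correction (u : nat * bool -> R) (i : nat * bool) : R :=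
  let (j, b) := i in
  let r1 := remainder (fun v => v) u j in
  let r2 := remainder (fun v => v ^ 2) u j in
  if b then / 4 * r1 + - / 8 * ((INR j + 1) ^ 2 * r2)
  else - (3 / 2) * r1 + 3 / 8 * ((INR j + 1) ^ 2 * r2).

(* Since n_k >= 4096 k^4, a combination of two O(1/n_k) remainders, one of them
   amplified by k^2, is still O(1/k^2). *)
Lemma combination_bound (j : nat) (a b r1 r2 M c : R) :
  0 <= M -> (Rabs a + Rabs b) * M <= 4096 * c ->
  Rabs r1 <= M / INR (node (S j)) -> Rabs r2 <= M / INR (node (S j)) ->
  Rabs (a * r1 + b * ((INR j + 1) ^ 2 * r2)) <= c * isq j.
Proof.
  intros HM Hc H1 H2. pose proof (node_large j) as HX. set (X := INR (node (S j))) in *.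
  set (K := (INR j + 1) ^ 2). pose proof (pos_INR j).
  assert (HK : 1 <= K) by (unfold K; nra).
  replace ((INR j + 1) ^ 4) with (K * K) in HX by (unfold K; ring).
  assert (HXpos : 0 < X) by nra.
  replace (isq j) with (/ K) by reflexivity.
  assert (Hsum : Rabs (a * r1 + b * (K * r2)) <= (Rabs a + Rabs b) * K * (M / X)).
  { eapply Rle_trans; [apply Rabs_triang|]. rewrite !Rabs_mult, (Rabs_right K) by lra.
    pose proof (Rabs_pos a); pose proof (Rabs_pos b).
    assert (0 <= M / X) by (apply Rmult_le_pos; [lra | left; apply Rinv_0_lt_compat; lra]).
    assert (Rabs a * Rabs r1 <= Rabs a * (M / X)) by (apply Rmult_le_compat_l; lra).
    assert (Rabs b * (K * Rabs r2) <= Rabs b * (K * (M / X)))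
      by (apply Rmult_le_compat_l; [lra | apply Rmult_le_compat_l; lra]).
    assert (0 <= Rabs a * (M / X) * (K - 1)) by (apply Rmult_le_pos; [apply Rmult_le_pos|]; lra).
    nra. }
  eapply Rle_trans; [exact Hsum|].
  assert (HMX : (Rabs a + Rabs b) * M / X <= c / (K * K)).
  { apply Rle_trans with ((Rabs a + Rabs b) * M / (4096 * (K * K))).
    - pose proof (Rabs_pos a); pose proof (Rabs_pos b).
      apply Rmult_le_compat_l; [nra|]. apply Rinv_le_contravar; nra.
    - unfold Rdiv. rewrite Rinv_mult. apply Rle_trans with (4096 * c * (/ 4096 * / (K * K))).
      + apply Rmult_le_compat_r; [|exact Hc]. apply Rmult_le_pos; [lra|].
        left; apply Rinv_0_lt_compat; nra.
      + right; field; nra. }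
  replace ((Rabs a + Rabs b) * K * (M / X)) with (K * ((Rabs a + Rabs b) * M / X)) by (unfold Rdiv; ring).
  apply Rle_trans with (K * (c / (K * K))); [apply Rmult_le_compat_l; lra|].
  right; field; lra.
Qed.

Lemma combination_sub (a b K r1 r2 r1' r2' : R) :
  a * r1 + b * (K * r2) - (a * r1' + b * (K * r2'))
  = a * (r1 - r1') + b * (K * (r2 - r2')).
Proof. ring. Qed.

Lemma correction_box (u : nat * bool -> R) :
  in_box weight u -> in_box weight (correction u).
Proof.
  intros Hu [j b]. unfold weight; simpl fst. replace (isq j / 2) with (/ 2 * isq j) by field.
  pose proof (remainder_bound _ j profile_id u Hu).
  pose proof (remainder_bound _ j profile_square u Hu).
  destruct b; cbv beta iota zeta delta [correction];
    apply (combination_bound j _ _ _ _ 174); try lra.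
  - rewrite Rabs_right, Rabs_left; lra.
  - rewrite Rabs_left, Rabs_right; lra.
Qed.

Lemma correction_contract (u v : nat * bool -> R) (delta : R) :
  in_box weight u -> in_box weight v -> close weight u v delta ->
  close weight (correction u) (correction v) (delta / 2).
Proof.
  intros Hu Hv Huv [j b]. unfold weight; simpl fst.
  pose proof (close_nonneg u v delta Huv) as Hdelta.
  pose proof (remainder_lipschitz _ j profile_id u v delta Hu Hv Huv).
  pose proof (remainder_lipschitz _ j profile_square u v delta Hu Hv Huv).
  destruct b; cbv beta iota zeta delta [correction]; rewrite combination_sub;
    apply (combination_bound j _ _ _ _ (96 * delta)); try lra.
  - rewrite Rabs_right, Rabs_left; lra.
  - rewrite Rabs_left, Rabs_right; lra.
Qed.

Lemma fixed_point_zseries (u : nat * bool -> R) (j0 : nat) :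
  in_box weight u -> (forall i, correction u i = u i) ->
  Zseries (fun z => quotient (fun v => v) (center j0) z (seq_a u z)) 0 /\
  Zseries (fun z => quotient (fun v => v ^ 2) (center j0) z (seq_a u z)) 0.
Proof.
  intros Hu Hfix. pose proof (isq_pos j0).
  assert (Hisq : isq j0 * (INR j0 + 1) ^ 2 = 1) by (unfold isq; field; pose proof (pos_INR j0); lra).
  split.
  - replace 0 with (block_term (quotient (fun v => v) (center j0)) u j0 + remainder (fun v => v) u j0).
    + exact (zseries_at_center _ j0 profile_id u Hu).
    + rewrite own_block_linear. unfold xi, eta.
      rewrite <- (Hfix (j0, true)), <- (Hfix (j0, false)). cbv beta iota zeta delta [correction]. field.
  - replace 0 with (block_term (quotient (fun v => v ^ 2) (center j0)) u j0 + remainder (fun v => v ^ 2) u j0).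
    + exact (zseries_at_center _ j0 profile_square u Hu).
    + rewrite own_block_square. unfold xi, eta.
      rewrite <- (Hfix (j0, true)), <- (Hfix (j0, false)). cbv beta iota zeta delta [correction].
      transitivity ((1 - isq j0 * (INR j0 + 1) ^ 2) * remainder (fun v => v ^ 2) u j0); [field|].
      rewrite Hisq; ring.
Qed.

Lemma seq_a_pos (u : nat * bool -> R) (z : Z) : in_box weight u -> 0 < seq_a u z.
Proof.
  intro Hu. unfold seq_a. assert (0 < decay z) by (apply pow_lt; lra).
  destruct (Z.ltb z 0); [assumption|].
  destruct (block_of (Z.to_nat z)) as [[j d]|]; [apply block_value_bounds, Hu | assumption].
Qed.

Lemma seq_a_at_node (u : nat * bool -> R) (k : nat) : (1 <= k)%nat ->
  seq_a u (Z.of_nat (node k)) = 2 * isq (k - 1) + xi u (k - 1).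
Proof.
  intro Hk. unfold seq_a.
  replace (Z.ltb (Z.of_nat (node k)) 0) with false by (symmetry; apply Z.ltb_ge; lia).
  replace (Z.to_nat (Z.of_nat (node k))) with (block_start (k - 1) + 1)%nat
    by (unfold block_start; replace (S (k - 1)) with k by lia; pose proof (node_pos k); lia).
  rewrite block_of_block by lia. reflexivity.
Qed.

(* a is summable: its blocks are O(1/k^2) and the background is geometric. *)
Lemma seq_a_ell1 (u : nat * bool -> R) : in_box weight u -> ell1 (seq_a u).
Proof.
  intro Hu.
  destruct inverse_square_series as [Sq [HS _]].
  destruct (series_comparison (block_term (fun _ v => Rabs v) u) isq Sq 12) as [L [HL _]];
    [lra | | exact HS |].
  { intro j. replace (12 * isq j) with (INR 4 * (3 * isq j)) by (simpl; ring).
    apply sum_bound; intros d _. rewrite Rabs_Rabsolu.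
    destruct (block_value_bounds u j d Hu). rewrite Rabs_right; lra. }
  destruct (series_comparison (base_part (fun _ v => Rabs v)) (fun n => (/ 2) ^ n) 2 2)
    as [LB [HB _]]; [lra | | exact geometric_half |].
  { intro n. unfold base_part, decay.
    replace (Z.abs_nat (Z.of_nat n)) with n by lia.
    replace (Z.abs_nat (- Z.of_nat n - 1)) with (S n) by lia.
    assert (0 < (/ 4) ^ n <= (/ 2) ^ n) by (split; [apply pow_lt | apply pow_incr]; lra).
    assert (0 < (/ 4) ^ S n <= (/ 2) ^ n) by (simpl; split; nra).
    rewrite (Rabs_right ((/ 4) ^ n)), (Rabs_right ((/ 4) ^ S n)) by lra.
    destruct (block_of n); rewrite Rabs_right by lra; lra. }
  exists (L + LB). apply (zseries_split (fun _ v => Rabs v) u 3); [lra | | exact HL | exact HB].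
  intros j d _. rewrite Rabs_Rabsolu. destruct (block_value_bounds u j d Hu). rewrite Rabs_right; lra.
Qed.

Theorem proposition4p1 :
  exists (a : Z -> R) (nk : nat -> nat) (alpha : nat -> R),
    ell1 a /\
    (forall n : Z, 0 < a n) /\
    (forall k : nat, (1 <= k)%nat -> (nk (S k) > 2 * nk k)%nat) /\
    (forall k : nat, (1 <= k)%nat ->
       let s := INR (nk k) + / 2 in
       sin_series_value a s 0 /\
       sin_series_value (fun n => (a n) ^ 2) s 0 /\
       1 < alpha k < 3 /\
       a (Z.of_nat (nk k)) = alpha k / (INR k) ^ 2).
Proof.
  destruct (weighted_contraction_fixed_point _ weight weight_pos correction
              correction_box correction_contract) as [u [Hu Hfix]].
  exists (seq_a u), node, (fun k => INR k ^ 2 * seq_a u (Z.of_nat (node k))).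
  split; [exact (seq_a_ell1 u Hu)|]. split; [intro; exact (seq_a_pos u _ Hu)|].
  split; [intros k _; rewrite node_S; pose proof (node_pos k); lia|].
  intros k Hk s. pose proof (le_INR _ _ Hk) as Hk'; simpl INR in Hk'.
  assert (Hs : s = center (k - 1)) by (unfold s, center; do 3 f_equal; lia).
  destruct (fixed_point_zseries u (k - 1) Hu Hfix) as [H1 H2]. rewrite <- Hs in H1, H2.
  split; [exists 0; split; [exact H1 | ring]|].
  split; [exists 0; split; [exact H2 | ring]|].
  split; [|field; lra].
  assert (Hisq : isq (k - 1) = / INR k ^ 2)
    by (unfold isq; rewrite minus_INR by lia; simpl INR; f_equal; ring).
  pose proof (Rabs_le_between _ _ (Hu ((k - 1)%nat, true))) as Hxi. unfold weight in Hxi; simpl fst in Hxi.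
  rewrite seq_a_at_node, Hisq by exact Hk. rewrite Hisq in Hxi. unfold xi.
  assert (HK : 0 < INR k ^ 2) by nra.
  replace (INR k ^ 2 * (2 * / INR k ^ 2 + u ((k - 1)%nat, true)))
    with (2 + INR k ^ 2 * u ((k - 1)%nat, true)) by (field; lra).
  assert (Hbound : INR k ^ 2 * (/ INR k ^ 2 / 2) = / 2) by (field; lra).
  split; nra.
Qed.
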